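(* Let $f(x,y)=-x^3e^y(x+e^y)$ and consider the constrained system $$\ddot x+\Big(\frac{1}{x+e^y}+\frac3x\Big)\dot x^2=0,\qquad \ddot y+\Big(\frac{e^y}{x+e^y}+1\Big)\dot y^2=0,\qquad f(x,y)\dot x\dot y=E_0\neq0,$$ i.e. the non-null geodesics of the metric $\gamma_{12}=\gamma_{21}=f$, $\gamma_{11}=\gamma_{22}=0$, with $\gamma_{ab}\dot q^a\dot q^b=2E_0$. Then $$I_1=x^6(x+e^y)^2\dot x^2+\frac{E_0}{2}x^4$$ is a first integral of this constrained system. Moreover, along any solution with $I_1=0$ one has $E_0<0$, the orbit is $y=\ln(c_1x^2-2x)$ for a constant $c_1$, and $t=\pm\sqrt{-2/E_0}\,\big(\tfrac{c_1}{4}x^4-\tfrac{x^3}{3}\big)+t_0$ for a constant $t_0$.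
   Context: A first integral of the constrained system is a function whose time derivative vanishes along every solution of the three displayed equations. The metric here is defined on the region where $f\neq0$. *)

From Stdlib Require Import Reals.
From Coquelicot Require Import Coquelicot.
Open Scope R_scope.

Definition fmet (x y : R) : R := - x ^ 3 * exp y * (x + exp y).

Definition I1 (E0 x y v : R) : R :=
  x ^ 6 * (x + exp y) ^ 2 * v ^ 2 + E0 / 2 * x ^ 4.

Definition time_interval (D : R -> Prop) : Prop :=
  (exists t, D t) /\
  (forall a b c, D a -> D c -> a <= b <= c -> D b) /\
  (forall t, D t -> exists eps, 0 < eps /\ forall s, Rabs (s - t) < eps -> D s).

Definition is_solution (E0 : R) (D : R -> Prop) (x y : R -> R) : Prop :=
  forall t, D t ->
    ex_derive x t /\ ex_derive (Derive x) t /\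
    ex_derive y t /\ ex_derive (Derive y) t /\
    fmet (x t) (y t) <> 0 /\
    Derive (Derive x) t
      + (/ (x t + exp (y t)) + 3 / x t) * (Derive x t) ^ 2 = 0 /\
    Derive (Derive y) t
      + (exp (y t) / (x t + exp (y t)) + 1) * (Derive y t) ^ 2 = 0 /\
    fmet (x t) (y t) * Derive x t * Derive y t = E0.

(** Differentiating [I1] and substituting the geodesic equation for [x'']
    and the constraint for [E0] gives zero identically.  Since
    [I1 = x^4 (J^2 + E0/2)] with [J = x (x + e^y) x'], the level [I1 = 0]
    forces [J^2 = -E0/2 > 0], so [E0 < 0].  Comparing [I1 = 0] with the
    constraint yields [x e^y y' = 2 (x + e^y) x'], which makes
    [(e^y + 2x)/x^2] constant: this is the orbit [e^y = c1 x^2 - 2x].  On it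
    [d/dt (c1 x^4/4 - x^3/3) = J], and [J] is constant by the geodesic
    equation, hence equal to [± sqrt (-E0/2)]; integrating gives [t]. *)

From Stdlib Require Import Reals Lra.
From Coquelicot Require Import Coquelicot.
Open Scope R_scope.

Lemma is_derive0_const_on (D : R -> Prop) (F : R -> R) :
  (forall a b c, D a -> D c -> a <= b <= c -> D b) ->
  (forall t, D t -> is_derive F t 0) ->
  forall a b, D a -> D b -> F a = F b.
Proof.
intros HD HF.
assert (Hle : forall a b, D a -> D b -> a <= b -> F a = F b).
{ intros a b Ha Hb Hab.
  assert (Hin : forall z, Rmin a b <= z <= Rmax a b -> D z).
  { intros z Hz. rewrite Rmin_left, Rmax_right in Hz by lra. exact (HD a z b Ha Hb Hz). }
  destruct (MVT_gen F a b (fun _ => 0)) as [c [_ Hc]].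
  - intros z Hz. apply HF, Hin. lra.
  - intros z Hz. apply continuity_pt_filterlim.
    apply (ex_derive_continuous (K := R_AbsRing) (V := R_NormedModule)).
    exists 0. exact (HF z (Hin z Hz)).
  - lra. }
intros a b Ha Hb. destruct (Rle_dec a b).
- auto.
- symmetry. apply Hle; auto; lra.
Qed.

Lemma sq_eq_sq_sign (a k : R) :
  a * a = k * k -> exists sgn, (sgn = 1 \/ sgn = -1) /\ a = sgn * k.
Proof.
intros H.
assert (Hf : (a - k) * (a + k) = 0) by lra.
destruct (Rmult_integral _ _ Hf).
- exists 1. split; [left | ]; lra.
- exists (-1). split; [right | ]; lra.
Qed.

Lemma sqrt_inv_mul_sqrt (a : R) : 0 < a -> sqrt (/ a) * sqrt a = 1.
Proof.
intros Ha. rewrite sqrt_inv. apply Rinv_l. apply Rgt_not_eq, sqrt_lt_R0, Ha.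
Qed.

Lemma fmet_neq0 (X Y : R) : fmet X Y <> 0 -> X <> 0 /\ X + exp Y <> 0.
Proof.
unfold fmet. intros H. split; intro E; apply H; rewrite E; ring.
Qed.

Lemma I1_factor (E0 X Y V : R) :
  I1 E0 X Y V = X ^ 4 * ((X * (X + exp Y) * V) ^ 2 + E0 / 2).
Proof. unfold I1. ring. Qed.

Lemma I1_on_constraint (X Y V W : R) :
  I1 (fmet X Y * V * W) X Y V
  = X ^ 6 * (X + exp Y) * V * (2 * (X + exp Y) * V - X * exp Y * W) / 2.
Proof. unfold I1, fmet. field. Qed.

Definition J (x y : R -> R) (s : R) : R := x s * (x s + exp (y s)) * Derive x s.

Definition orbit_constant (x y : R -> R) (s : R) : R :=
  (exp (y s) + 2 * x s) / x s ^ 2.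

Definition time_offset (E0 c1 sgn : R) (x : R -> R) (s : R) : R :=
  s - sgn * sqrt (- 2 / E0) * (c1 / 4 * x s ^ 4 - x s ^ 3 / 3).

Section ConstrainedGeodesic.

Variables (E0 : R) (D : R -> Prop) (x y : R -> R).
Hypothesis solution : is_solution E0 D x y.

Lemma solution_x_neq0 t : D t -> x t <> 0.
Proof. intros Ht. apply (fmet_neq0 _ (y t)), (solution t Ht). Qed.

Lemma solution_x_exp_y_neq0 t : D t -> x t + exp (y t) <> 0.
Proof. intros Ht. apply (fmet_neq0 (x t)), (solution t Ht). Qed.

Lemma solution_ddx t : D t ->
  Derive (Derive x) t = - (/ (x t + exp (y t)) + 3 / x t) * Derive x t ^ 2.
Proof. intros Ht. destruct (solution t Ht) as (_ & _ & _ & _ & _ & Ex & _). lra. Qed.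

Lemma is_derive_I1 t : D t ->
  is_derive (fun s => I1 E0 (x s) (y s) (Derive x s)) t 0.
Proof.
intros Ht. destruct (solution t Ht) as (dx & ddx & dy & _ & _ & _ & _ & Ec).
pose proof (solution_x_neq0 t Ht) as Hx. pose proof (solution_x_exp_y_neq0 t Ht) as Hu.
unfold I1. auto_derive.
- repeat split; auto.
- change (fun s => x s) with x; change (fun s => y s) with y.
  change (fun s => Derive x s) with (Derive x).
  rewrite (solution_ddx t Ht), <- Ec. unfold fmet. field. auto.
Qed.

Hypothesis E0_neq0 : E0 <> 0.

Lemma solution_dx_neq0 t : D t -> Derive x t <> 0.
Proof.
intros Ht E. destruct (solution t Ht) as (_ & _ & _ & _ & _ & _ & _ & Ec).
apply E0_neq0. rewrite <- Ec, E. ring.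
Qed.

Lemma J_neq0 t : D t -> J x y t <> 0.
Proof.
intros Ht. unfold J. repeat apply Rmult_integral_contrapositive_currified.
- apply (solution_x_neq0 t Ht).
- apply (solution_x_exp_y_neq0 t Ht).
- apply (solution_dx_neq0 t Ht).
Qed.

Hypothesis I1_level0 : forall t, D t -> I1 E0 (x t) (y t) (Derive x t) = 0.

Lemma J_sq t : D t -> J x y t * J x y t = - E0 / 2.
Proof.
intros Ht. pose proof (I1_level0 t Ht) as H. rewrite I1_factor in H.
apply Rmult_integral in H. destruct H as [H | H].
- exfalso. exact (pow_nonzero _ 4 (solution_x_neq0 t Ht) H).
- unfold J. lra.
Qed.

Lemma E0_neg t : D t -> E0 < 0.
Proof.
intros Ht. pose proof (J_sq t Ht) as Hsq.
assert (Hpos : 0 < J x y t * J x y t).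
{ rewrite <- Rsqr_def. apply Rsqr_pos_lt, (J_neq0 t Ht). }
lra.
Qed.

Lemma orbit_relation t : D t ->
  x t * exp (y t) * Derive y t = 2 * (x t + exp (y t)) * Derive x t.
Proof.
intros Ht. destruct (solution t Ht) as (_ & _ & _ & _ & _ & _ & _ & Ec).
pose proof (I1_level0 t Ht) as H.
rewrite <- Ec, I1_on_constraint in H.
assert (Hfac : x t ^ 6 * (x t + exp (y t)) * Derive x t <> 0).
{ replace (x t ^ 6 * (x t + exp (y t)) * Derive x t) with (x t ^ 5 * J x y t)
    by (unfold J; ring).
  apply Rmult_integral_contrapositive_currified.
  - apply pow_nonzero, (solution_x_neq0 t Ht).
  - apply (J_neq0 t Ht). }
assert (Hz : x t ^ 6 * (x t + exp (y t)) * Derive x t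
  * (2 * (x t + exp (y t)) * Derive x t - x t * exp (y t) * Derive y t) = 0) by lra.
destruct (Rmult_integral _ _ Hz) as [H0 | H0]; [contradiction | lra].
Qed.

Lemma solution_dy t : D t ->
  Derive y t = 2 * (x t + exp (y t)) * Derive x t / (x t * exp (y t)).
Proof.
intros Ht. rewrite <- (orbit_relation t Ht). field.
split; [apply Rgt_not_eq, exp_pos | apply (solution_x_neq0 t Ht)].
Qed.

Lemma is_derive_orbit_constant t : D t -> is_derive (orbit_constant x y) t 0.
Proof.
intros Ht. destruct (solution t Ht) as (dx & _ & dy & _).
pose proof (solution_x_neq0 t Ht) as Hx.
unfold orbit_constant. auto_derive.
- repeat split; auto.
- change (fun s => x s) with x; change (fun s => y s) with y.
  rewrite (solution_dy t Ht). field. split; auto. apply Rgt_not_eq, exp_pos.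
Qed.

Lemma is_derive_J t : D t -> is_derive (J x y) t 0.
Proof.
intros Ht. destruct (solution t Ht) as (dx & ddx & dy & _).
pose proof (solution_x_neq0 t Ht) as Hx. pose proof (solution_x_exp_y_neq0 t Ht) as Hu.
unfold J. auto_derive.
- repeat split; auto.
- change (fun s => x s) with x; change (fun s => y s) with y.
  change (fun s => Derive x s) with (Derive x).
  rewrite (solution_ddx t Ht), (solution_dy t Ht). field.
  repeat split; auto. apply Rgt_not_eq, exp_pos.
Qed.

Lemma is_derive_time_offset c1 sgn t : D t ->
  exp (y t) = c1 * x t ^ 2 - 2 * x t ->
  (sgn = 1 \/ sgn = -1) -> J x y t = sgn * sqrt (- E0 / 2) ->
  is_derive (time_offset E0 c1 sgn x) t 0.
Proof.
intros Ht Horb Hsgn HJ. destruct (solution t Ht) as (dx & _).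
assert (Hk : sqrt (- 2 / E0) * sqrt (- E0 / 2) = 1).
{ replace (- 2 / E0) with (/ (- E0 / 2)) by (field; exact E0_neq0).
  apply sqrt_inv_mul_sqrt. pose proof (E0_neg t Ht). lra. }
unfold time_offset. auto_derive; auto.
(* on the orbit, [d/dt (c1 x^4/4 - x^3/3) = (c1 x^2 - x) x x' = J] *)
transitivity (1 - sgn * sqrt (- 2 / E0) * J x y t).
- unfold J. rewrite Horb. change (fun s => x s) with x. field.
- rewrite HJ.
  replace (1 - sgn * sqrt (- 2 / E0) * (sgn * sqrt (- E0 / 2)))
    with (1 - sgn * sgn * (sqrt (- 2 / E0) * sqrt (- E0 / 2))) by ring.
  rewrite Hk. destruct Hsgn; subst; ring.
Qed.

End ConstrainedGeodesic.

Theorem mainTheorem9 (E0 : R) (D : R -> Prop) (x y : R -> R) :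
  E0 <> 0 -> time_interval D -> is_solution E0 D x y ->
  (forall t, D t ->
     is_derive (fun s => I1 E0 (x s) (y s) (Derive x s)) t 0) /\
  ((forall t, D t -> I1 E0 (x t) (y t) (Derive x t) = 0) ->
     E0 < 0 /\
     exists c1 : R,
       (forall t, D t ->
          0 < c1 * x t ^ 2 - 2 * x t /\
          y t = ln (c1 * x t ^ 2 - 2 * x t)) /\
       exists (t0 sgn : R), (sgn = 1 \/ sgn = -1) /\
         forall t, D t ->
           t = sgn * sqrt (- 2 / E0) * (c1 / 4 * x t ^ 4 - x t ^ 3 / 3) + t0).
Proof.
intros HE [[ts Hts] [Hconv _]] Hs.
split; [exact (is_derive_I1 E0 D x y Hs) | intros HI].
pose proof (fun F => is_derive0_const_on D F Hconv) as Hconst.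
pose proof (E0_neg E0 D x y Hs HE HI ts Hts) as HE0.
split; [exact HE0 |].
set (c1 := orbit_constant x y ts).
assert (Horb : forall t, D t -> exp (y t) = c1 * x t ^ 2 - 2 * x t).
{ intros t Ht.
  unfold c1. rewrite <- (Hconst _ (is_derive_orbit_constant E0 D x y Hs HE HI) t ts Ht Hts).
  unfold orbit_constant. field. exact (solution_x_neq0 E0 D x y Hs t Ht). }
exists c1. split.
{ intros t Ht. rewrite <- Horb by exact Ht. split; [apply exp_pos | now rewrite ln_exp]. }
destruct (sq_eq_sq_sign (J x y ts) (sqrt (- E0 / 2))) as [sgn [Hsgn HJ]].
{ rewrite (J_sq E0 D x y Hs HI ts Hts). symmetry. apply sqrt_sqrt. lra. }
assert (HJt : forall t, D t -> J x y t = sgn * sqrt (- E0 / 2)).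
{ intros t Ht. rewrite <- HJ. exact (Hconst _ (is_derive_J E0 D x y Hs HE HI) t ts Ht Hts). }
exists (time_offset E0 c1 sgn x ts), sgn. split; [exact Hsgn |].
intros t Ht.
rewrite <- (Hconst _ (fun s Hs' => is_derive_time_offset E0 D x y Hs HE HI c1 sgn s Hs'
  (Horb s Hs') Hsgn (HJt s Hs')) t ts Ht Hts).
unfold time_offset. ring.
Qed.
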